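(* Let $Q$ be a reduced quantale with bottom element $0$. Then the m-filter $\mathcal{F}_{\nmid0}$ is conormal over $Q$. Moreover, for $x,y\in Q$, $\overline x=\overline y$ in $Q_{\mathcal{F}_{\nmid0}}$ if and only if $\hbar(x)=\hbar(y)$, where $\hbar:Q\to Q$, $\hbar(q)=\sum\{q'\in Q:qq'=0\}$.
   Context: A quantale is a poset $Q$ with all nonempty joins $\sum$, top $1$, commutative associative multiplication with unit $1$ distributing over nonempty joins. $Q$ with bottom $0$ is reduced if $a^2=0$ implies $a=0$. An m-filter is a subset of $Q$ containing $1$, upward closed and closed under multiplication. For $a\in Q$ the codense filter is $\mathcal{F}_{\nmid a}=\{q\in Q: \text{for all }x\in Q,\ qx\le a\Rightarrow x\le a\}$ (an m-filter). For $a,b\in Q$: $a\preceq^1_\mathcal{F}b$ means there are families $(a_i)$ in $Q$, $(s_i)$ in $\mathcal{F}$ with $a\le\sum a_i$ and $s_ia_i\le b$; $a\preceq^n_\mathcal{F}b$ means a chain of $n$ such steps; $a\preceq_\mathcal{F}b$ means $a\preceq^n_\mathcal{F}b$ for some $n\ge1$. $Q_\mathcal{F}$ is $Q$ modulo $a\sim b\iff a\preceq_\mathcal{F}b\preceq_\mathcal{F}a$, with classes $\overline a$. $\mathcal{C}$ is conormal over $Q$ (as a module over itself) if for all $m,n\in Q$ with $m\preceq^1_\mathcal{C}n$ there is $s\in\mathcal{C}$ with $sm\le n$. *)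

Set Implicit Arguments.

(** The join of a subset S is [qsup S]; it is only specified for nonempty S. *)
Record quantale := Quantale {
  qcar :> Type;
  qle : qcar -> qcar -> Prop;
  qle_refl : forall x, qle x x;
  qle_antisym : forall x y, qle x y -> qle y x -> x = y;
  qle_trans : forall x y z, qle x y -> qle y z -> qle x z;
  qsup : (qcar -> Prop) -> qcar;
  qsup_ub : forall (S : qcar -> Prop) x, S x -> qle x (qsup S);
  qsup_least : forall (S : qcar -> Prop) u, (exists x, S x) ->
      (forall x, S x -> qle x u) -> qle (qsup S) u;
  qone : qcar;
  qle_one : forall x, qle x qone;
  qmul : qcar -> qcar -> qcar;
  qmulC : forall x y, qmul x y = qmul y x;
  qmulA : forall x y z, qmul x (qmul y z) = qmul (qmul x y) z;
  qmul1 : forall x, qmul qone x = x;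
  qmul_sup : forall (S : qcar -> Prop) a, (exists x, S x) ->
      qmul a (qsup S) = qsup (fun z => exists x, S x /\ z = qmul a x)
}.

Section Defs.
Variable Q : quantale.
Local Notation "x <= y" := (qle Q x y).
Local Notation "x * y" := (qmul Q x y).

Definition is_bottom (z : Q) : Prop := forall x : Q, z <= x.

Definition reduced (z : Q) : Prop := forall a : Q, a * a = z -> a = z.

Definition fsup (I : Type) (f : I -> Q) : Q := qsup Q (fun z => exists i, z = f i).

Definition mfilter (F : Q -> Prop) : Prop :=
  F (qone Q) /\ (forall x y, F x -> x <= y -> F y) /\
  (forall x y, F x -> F y -> F (x * y)).

(** Codense filter F_{∤a}. *)
Definition codense (a : Q) : Q -> Prop :=
  fun q => forall x : Q, q * x <= a -> x <= a.

Definition preceq1 (F : Q -> Prop) (a b : Q) : Prop :=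
  exists (I : Type) (ai : I -> Q) (si : I -> Q),
    inhabited I /\ a <= fsup ai /\ (forall i, F (si i)) /\
    (forall i, si i * ai i <= b).

Fixpoint preceqn (F : Q -> Prop) (n : nat) (a b : Q) : Prop :=
  match n with
  | O => a = b
  | S n' => exists c, preceq1 F a c /\ preceqn F n' c b
  end.

Definition preceq (F : Q -> Prop) (a b : Q) : Prop :=
  exists n : nat, (1 <= n)%nat /\ preceqn F n a b.

(** The equivalence defining Q_F: classes ā = b̄ iff a ~ b. *)
Definition Fequiv (F : Q -> Prop) (a b : Q) : Prop :=
  preceq F a b /\ preceq F b a.

Definition conormal (F : Q -> Prop) : Prop :=
  forall m n : Q, preceq1 F m n -> exists s, F s /\ s * m <= n.

Definition hbar (z : Q) (q : Q) : Q := qsup Q (fun q' => q * q' = z).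

End Defs.

Arguments is_bottom {Q}.
Arguments reduced {Q}.
Arguments codense {Q}.
Arguments conormal {Q}.
Arguments Fequiv {Q}.
Arguments hbar {Q}.
Arguments preceq {Q}.
Arguments preceq1 {Q}.
Arguments preceqn {Q}.
Arguments mfilter {Q}.
Arguments fsup {Q I}.

(* The relation [x ≼ y] for the codense filter of 0 is reverse inclusion of
   annihilators, [ħ(y) <= ħ(x)].  Annihilators can only grow along a step
   [x ≼¹ y]: if [y w = 0] and [s_i a_i <= y], then [s_i (w a_i) = 0], so
   [w a_i = 0] by codensity of [s_i], and [w x <= ∑ w a_i = 0].  Conversely,
   when [x ħ(y) = 0] the single element [s = y ∨ ħ(y)] witnesses [x ≼¹ y]
   with [s x <= y]; reducedness is exactly what makes [s] codense, since
   [s u = 0] forces [u <= ħ(y)] and then [u u <= ħ(y) u = 0].  The same [s]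
   gives conormality. *)
Set Implicit Arguments.
Unset Strict Implicit.

Section Quantale.
Variable Q : quantale.
Local Notation "x <= y" := (qle Q x y).
Local Notation "x * y" := (qmul Q x y).

Definition qjoin (a b : Q) : Q := qsup Q (fun w => w = a \/ w = b).

Lemma qjoin_ubl a b : a <= qjoin a b.
Proof. apply qsup_ub; auto. Qed.

Lemma qjoin_ubr a b : b <= qjoin a b.
Proof. apply qsup_ub; auto. Qed.

Lemma qjoin_idr a b : a <= b -> qjoin a b = b.
Proof.
  intro Hab. apply qle_antisym.
  - apply qsup_least; [exists a; auto|].
    intros x [-> | ->]; auto using qle_refl.
  - apply qjoin_ubr.
Qed.

Lemma qmul_sup_least c (S : Q -> Prop) u :
  (exists x, S x) -> (forall x, S x -> c * x <= u) -> c * qsup Q S <= u.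
Proof.
  intros HS Hu. rewrite qmul_sup by exact HS.
  destruct HS as [x0 Hx0].
  apply qsup_least; [exists (c * x0); eauto|].
  intros w [x [Hx ->]]. auto.
Qed.

Lemma qmul_monotone_r a b c : a <= b -> c * a <= c * b.
Proof.
  intro Hab. rewrite <- (qjoin_idr Hab). unfold qjoin.
  rewrite qmul_sup by (exists a; auto).
  apply qsup_ub. exists a; auto.
Qed.

Lemma qmul_monotone_l a b c : a <= b -> a * c <= b * c.
Proof. intro Hab. rewrite (qmulC _ a), (qmulC _ b). now apply qmul_monotone_r. Qed.

Lemma qmul_le_l a b : a * b <= a.
Proof.
  rewrite qmulC. eapply qle_trans; [apply qmul_monotone_l, qle_one|].
  rewrite qmul1. apply qle_refl.
Qed.

Lemma qmul_le_r a b : a * b <= b.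
Proof. rewrite qmulC. apply qmul_le_l. Qed.

Lemma qmulCA a b c : a * (b * c) = b * (a * c).
Proof. rewrite !qmulA, (qmulC _ a b). reflexivity. Qed.

Lemma preceq1_codense_mul_le a x y w :
  preceq1 (codense a) x y -> y * w <= a -> x * w <= a.
Proof.
  intros [I [ai [si [[i0] [Hx [Hs Hsy]]]]]] Hyw.
  eapply qle_trans; [apply qmul_monotone_l, Hx|]. rewrite qmulC.
  apply qmul_sup_least; [exists (ai i0); eauto|].
  intros v [i ->]. apply (Hs i). rewrite qmulCA, (qmulC _ w).
  eapply qle_trans; [apply qmul_monotone_l, Hsy | exact Hyw].
Qed.

End Quantale.

Section ReducedQuantale.
Variable Q : quantale.
Variable z : Q.
Hypothesis hz : is_bottom z.
Hypothesis hred : reduced z.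
Local Notation "x <= y" := (qle Q x y).
Local Notation "x * y" := (qmul Q x y).

Lemma le_bottom_eq a : a <= z -> a = z.
Proof. intro Ha. apply qle_antisym; [exact Ha | apply hz]. Qed.

Lemma qmul_bottom x : x * z = z.
Proof. apply le_bottom_eq, qmul_le_r. Qed.

Lemma mul_hbar q : q * hbar z q = z.
Proof.
  apply le_bottom_eq. unfold hbar.
  apply qmul_sup_least; [exists z; apply qmul_bottom|].
  intros w ->. apply qle_refl.
Qed.

Lemma le_hbar q w : w <= hbar z q <-> q * w = z.
Proof.
  split; intro Hw.
  - apply le_bottom_eq. rewrite <- (mul_hbar q). now apply qmul_monotone_r.
  - now apply qsup_ub.
Qed.

Lemma codense_join_hbar n : codense z (qjoin n (hbar z n)).
Proof.
  intros u Hu.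
  assert (Hnu : n * u = z).
  { apply le_bottom_eq. eapply qle_trans; [|exact Hu].
    apply qmul_monotone_l, qjoin_ubl. }
  assert (Huu : u * u = z).
  { apply le_bottom_eq. eapply qle_trans; [|exact Hu].
    apply qmul_monotone_l. eapply qle_trans; [apply le_hbar, Hnu | apply qjoin_ubr]. }
  rewrite (hred Huu). apply qle_refl.
Qed.

Lemma join_hbar_mul_le n m : m * hbar z n = z -> qjoin n (hbar z n) * m <= n.
Proof.
  intro Hm. rewrite qmulC. apply qmul_sup_least; [exists n; auto|].
  intros x [-> | ->].
  - apply qmul_le_r.
  - rewrite Hm. apply hz.
Qed.

Lemma preceq1_codense_hbar m n : preceq1 (codense z) m n -> m * hbar z n = z.
Proof.
  intro Hmn. apply le_bottom_eq.
  apply (preceq1_codense_mul_le Hmn). rewrite mul_hbar. apply qle_refl.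
Qed.

Lemma preceqn_codense_hbar k x y :
  preceqn (codense z) k x y -> hbar z y <= hbar z x.
Proof.
  revert x. induction k as [|k IH]; simpl; intros x Hxy.
  - subst. apply qle_refl.
  - destruct Hxy as [c [Hxc Hcy]].
    apply le_hbar, le_bottom_eq, (preceq1_codense_mul_le Hxc).
    rewrite (proj1 (le_hbar c _) (IH c Hcy)). apply qle_refl.
Qed.

Lemma preceq1_codense_of_hbar x y :
  hbar z y <= hbar z x -> preceq1 (codense z) x y.
Proof.
  intro Hyx. exists unit, (fun _ => x), (fun _ => qjoin y (hbar z y)).
  split; [constructor; exact tt|].
  split; [apply qsup_ub; exists tt; reflexivity|].
  split; [intros; apply codense_join_hbar|].
  intros _. apply join_hbar_mul_le, le_hbar, Hyx.
Qed.

Lemma preceq_codense_hbar x y :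
  preceq (codense z) x y <-> hbar z y <= hbar z x.
Proof.
  split.
  - intros [k [_ Hk]]. exact (preceqn_codense_hbar Hk).
  - intro Hyx. exists 1%nat. split; [auto|].
    exists y. split; [now apply preceq1_codense_of_hbar | reflexivity].
Qed.

Lemma conormal_codense_bottom : conormal (codense z).
Proof.
  intros m n Hmn. exists (qjoin n (hbar z n)). split.
  - apply codense_join_hbar.
  - apply join_hbar_mul_le, preceq1_codense_hbar, Hmn.
Qed.

End ReducedQuantale.

Theorem mainTheorem15 (Q : quantale) (z : Q) (hz : is_bottom z)
  (hred : reduced z) :
  conormal (codense z) /\
  (forall x y : Q, Fequiv (codense z) x y <-> hbar z x = hbar z y).
Proof.
  split; [exact (conormal_codense_bottom hz hred)|].
  intros x y.
  destruct (preceq_codense_hbar hz hred x y) as [Hxy_le Hle_xy].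
  destruct (preceq_codense_hbar hz hred y x) as [Hyx_le Hle_yx].
  split.
  - intros [Hxy Hyx]. apply qle_antisym; auto.
  - intros E. split; [apply Hle_xy | apply Hle_yx]; rewrite E; apply qle_refl.
Qed.
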